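(* Let $K\subset\{1,\dots,2d\}$ be nonempty. For each $0\le n^0\le\sharp(K)$ and $0\le n^+\le\sharp(K)-n^0$, with $n^-=\sharp(K)-n^0-n^+$, the set $J^{(n^0,n^+,n^-)}_{\mathcal O_K^{\mathbb C}}$ is path connected.
   Context: Let $d\ge2$. $\mathcal B^{\mathbb C}$ is the quotient of the set of complex $2d\times4d$ matrices $(A\,|\,B)$ with $\operatorname{rank}(A\,|\,B)=2d$, $AB^*=BA^*$ (topology from $\mathbb C^{8d^2}$) by the left action $(A\,|\,B)\mapsto(TA\,|\,TB)$ of $GL(2d,\mathbb C)$, with quotient topology. For $K\subset\{1,\dots,2d\}$, $\mathcal O_K^{\mathbb C}$ is the set of classes $[A\,|\,B]$ having a representative with columns $a_i=-e_i$, $b_i=s_i$ for $i\in K$ and $a_i=s_i$, $b_i=e_i$ for $i\notin K$, where $S=(s_1,\dots,s_{2d})=(s_{lj})$ is a $2d\times2d$ Hermitian matrix (uniquely determined, denoted $S(\mathbf A)$) and $e_i$ are standard basis vectors; it carries the topology from $\mathcal B^{\mathbb C}$. For $K=\{n_1<\dots<n_{m_0}\}$, $S_K(\mathbf A)=(s_{n_in_j})_{i,j=1}^{m_0}$, and $J^{(n^0,n^+,n^-)}_{\mathcal O_K^{\mathbb C}}$ is the set of $\mathbf A\in\mathcal O_K^{\mathbb C}$ such that $S_K(\mathbf A)$ has exactly $n^0$ zero, $n^+$ positive and $n^-$ negative eigenvalues counted with multiplicity. *)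

From HB Require Import structures.
From mathcomp Require Import all_boot all_order all_algebra.
From mathcomp Require Import reals.
From mathcomp Require Import complex.
Set Implicit Arguments. Unset Strict Implicit. Unset Printing Implicit Defensive.
Import Order.TTheory GRing.Theory Num.Theory.
Local Open Scope ring_scope.

Section Defs.
Variable R : realType.
Local Notation C := (R[i]).
Variable d : nat.
Local Notation n := (2 * d)%N.

(* A point of the ambient space C^{8d^2}: a pair (A, B) of 2d x 2d matrices,
   standing for the 2d x 4d matrix (A | B). *)
Definition pt := ('M[C]_n * 'M[C]_n)%type.

Definition adjm (m : nat) (M : 'M[C]_m) : 'M[C]_m := (map_mx (@conjc R) M)^T.

Definition hermitian (S : 'M[C]_n) : Prop := adjm S = S.

Definition inM (x : pt) : Prop :=
  \rank (row_mx x.1 x.2) = n /\ x.1 *m adjm x.2 = x.2 *m adjm x.1.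

Definition equiv (x y : pt) : Prop :=
  exists T : 'M[C]_n, T \in unitmx /\ y.1 = T *m x.1 /\ y.2 = T *m x.2.

(* the normal-form representative attached to K and S *)
Definition AK (K : {set 'I_n}) (S : 'M[C]_n) : 'M[C]_n :=
  \matrix_(l, i) (if i \in K then - (l == i)%:R else S l i).
Definition BK (K : {set 'I_n}) (S : 'M[C]_n) : 'M[C]_n :=
  \matrix_(l, i) (if i \in K then S l i else (l == i)%:R).

(* [x] in O_K with S(x) = S *)
Definition OK_with (K : {set 'I_n}) (x : pt) (S : 'M[C]_n) : Prop :=
  hermitian S /\ equiv (AK K S, BK K S) x.

(* S_K : principal submatrix on the rows/columns in K, in increasing order *)
Definition subK (K : {set 'I_n}) (S : 'M[C]_n) : 'M[C]_#|K| :=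
  \matrix_(i, j) S (enum_val i) (enum_val j).

(* exactly n0 zero, np positive and nm negative eigenvalues counted with
   (algebraic) multiplicity: the roots of the characteristic polynomial *)
Definition inertia (m : nat) (M : 'M[C]_m) (n0 np nm : nat) : Prop :=
  exists rs : seq C,
    char_poly M = \prod_(r <- rs) ('X - r%:P) /\
    count (fun r => r == 0) rs = n0 /\
    count (fun r => 0 < r) rs = np /\
    count (fun r => r < 0) rs = nm.

(* J^{(n0,np,nm)}_{O_K}, on representatives *)
Definition inJ (K : {set 'I_n}) (n0 np nm : nat) (x : pt) : Prop :=
  inM x /\ exists S, OK_with K x S /\ inertia (subK K S) n0 np nm.

Definition near_pt (x y : pt) (eps : C) : Prop :=
  forall l j, `|y.1 l j - x.1 l j| < eps /\ `|y.2 l j - x.2 l j| < eps.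

(* V (a set of representatives) is the preimage of an open set of the
   quotient B^C: it is contained in M, saturated, and relatively open in M *)
Definition quot_open (V : pt -> Prop) : Prop :=
  (forall x, V x -> inM x) /\
  (forall x y, V x -> inM y -> equiv x y -> V y) /\
  (forall x, V x -> exists2 eps : C, 0 < eps &
     forall y, inM y -> near_pt x y eps -> V y).

(* g : [0,1] -> B^C (via representatives) is continuous for the quotient topology *)
Definition quot_path (g : R -> pt) : Prop :=
  (forall t, 0 <= t <= 1 -> inM (g t)) /\
  forall V, quot_open V ->
    forall t, 0 <= t <= 1 -> V (g t) ->
      exists2 del : R, 0 < del &
        forall s, 0 <= s <= 1 -> `|s - t| < del -> V (g s).

(* path connectedness of a class-invariant subset P of B^C, with the topology
   induced from B^C *)
Definition path_connected (P : pt -> Prop) : Prop :=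
  forall x y, P x -> P y ->
    exists g : R -> pt, quot_path g /\
      (forall t, 0 <= t <= 1 -> P (g t)) /\
      equiv x (g 0) /\ equiv y (g 1).

End Defs.

From Pilot Require Import Defs.
From HB Require Import structures.
From mathcomp Require Import all_boot all_order all_algebra.
From mathcomp Require Import reals complex.
From mathcomp Require Import fingroup perm sesquilinear spectral.
From mathcomp Require Import ring lra.
Import Order.TTheory GRing.Theory Num.Theory.
Set Implicit Arguments. Unset Strict Implicit. Unset Printing Implicit Defensive.
Local Open Scope ring_scope.
Local Open Scope complex_scope.

(* A point of O_K is determined by its Hermitian matrix S, and its normal-form
   representative (A_K(S), B_K(S)) depends affinely on S; a path of matrices S
   that is Lipschitz on [0, 1] therefore gives a path in the quotient topology.
   So it is enough to join two Hermitian matrices whose K-blocks have the same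
   inertia.  Off the K-block interpolate linearly.  On the K-block write
   H = U^* D U with U unitary and D real diagonal (spectral theorem), move D
   linearly to its matrix of signs (the signs do not change on the way), match
   the two sign matrices by a permutation matrix, and join the unitary factors
   inside the unitary group: U1 U0^* = V^* diag(w) V, and each w_i is joined to
   1 on the unit circle by the square of a Cayley transform. *)

Section Lipschitz.
Variable R : realType.
Local Notation C := R[i].

Lemma normcE_Re (z : C) : `|z| = (complex.Re `|z|)%:C.
Proof. by rewrite RRe_real // normr_real. Qed.

Lemma normc_real (x : R) : `|x%:C| = `|x|%:C :> C.
Proof. by rewrite normc_def /= expr0n /= addr0 sqrtr_sqr. Qed.

Definition lipschitz01 (f : R -> C) := exists2 L : R, 0 <= L &
  forall s t, 0 <= s -> s <= t -> t <= 1 -> `|f t - f s| <= (L * (t - s))%:C.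

Lemma eq_lipschitz01 f g : f =1 g -> lipschitz01 f -> lipschitz01 g.
Proof. by move=> e [L L0 h]; exists L => // s t *; rewrite -!e h. Qed.

Lemma lipschitz01_cst (c : C) : lipschitz01 (fun=> c).
Proof. by exists 0 => // s t _ _ _; rewrite subrr normr0 mul0r. Qed.

Lemma lipschitz01_id : lipschitz01 (fun t => t%:C).
Proof.
exists 1 => // s t _ st _; rewrite -rmorphB normc_real mul1r ger0_norm //.
by rewrite subr_ge0.
Qed.

Lemma lipschitz01D f g :
  lipschitz01 f -> lipschitz01 g -> lipschitz01 (fun t => f t + g t).
Proof.
move=> [L1 L10 h1] [L2 L20 h2]; exists (L1 + L2); first by rewrite addr_ge0.
move=> s t s0 st t1; rewrite opprD addrACA mulrDl rmorphD.
exact: le_trans (ler_normD _ _) (lerD (h1 _ _ s0 st t1) (h2 _ _ s0 st t1)).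
Qed.

Lemma lipschitz01J f : lipschitz01 f -> lipschitz01 (fun t => (f t)^*).
Proof. by move=> [L L0 h]; exists L => // s t *; rewrite -rmorphB normcJ h. Qed.

Lemma lipschitz01_bounded f : lipschitz01 f ->
  exists2 M : R, 0 <= M & forall s, 0 <= s -> s <= 1 -> `|f s| <= M%:C.
Proof.
move=> [L L0 h]; exists (complex.Re `|f 0| + L).
  by rewrite addr_ge0 // -lecR rmorph0 -normcE_Re.
move=> s s0 s1; rewrite -(subrK (f 0) (f s)) addrC.
apply: le_trans (ler_normD _ _) _; rewrite rmorphD {1}normcE_Re lerD //.
apply: le_trans (h 0 s _ _ _) _ => //; rewrite lecR subr0.
by rewrite -[X in _ <= X]mulr1 ler_wpM2l.
Qed.

Lemma lipschitz01M f g :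
  lipschitz01 f -> lipschitz01 g -> lipschitz01 (fun t => f t * g t).
Proof.
move=> hf hg; have [Mf Mf0 bf] := lipschitz01_bounded hf.
have [Mg Mg0 bg] := lipschitz01_bounded hg.
move: hf hg => [L1 L10 h1] [L2 L20 h2].
exists (Mf * L2 + L1 * Mg); first by rewrite addr_ge0 // mulr_ge0.
move=> s t s0 st t1; have t0 : 0 <= t by apply: le_trans st.
have s1 : s <= 1 by apply: le_trans t1.
have -> : f t * g t - f s * g s = f t * (g t - g s) + (f t - f s) * g s by ring.
apply: le_trans (ler_normD _ _) _; rewrite !normrM mulrDl rmorphD.
rewrite lerD //; first by rewrite -mulrA rmorphM ler_pM ?bf ?h2.
by rewrite mulrAC rmorphM ler_pM ?h1 ?bg.
Qed.

Lemma lipschitz01V f : lipschitz01 f -> (forall t, 1 <= `|f t|) ->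
  lipschitz01 (fun t => (f t)^-1).
Proof.
move=> [L L0 h] f_ge1; exists L => // s t s0 st t1.
have f_neq0 u : f u != 0 by rewrite -normr_gt0 (lt_le_trans ltr01).
have -> : (f t)^-1 - (f s)^-1 = (f s - f t) / (f t * f s).
  by have ft := f_neq0 t; have fs := f_neq0 s; field; rewrite ft fs.
rewrite normrM distrC.
apply: le_trans (h s t s0 st t1); rewrite -[X in _ <= X]mulr1 ler_wpM2l //.
rewrite normfV normrM invf_le1 ?mulr_gt0 ?normr_gt0 ?f_neq0 //.
by rewrite -[1]mulr1 ler_pM.
Qed.

Lemma lipschitz01_sum (I : Type) (r : seq I) (F : I -> R -> C) :
  (forall i, lipschitz01 (F i)) -> lipschitz01 (fun t => \sum_(i <- r) F i t).
Proof.
move=> hF; elim: r => [|i r IH].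
  by apply: eq_lipschitz01 (lipschitz01_cst 0) => t; rewrite big_nil.
by apply: eq_lipschitz01 (lipschitz01D (hF i) IH) => t; rewrite big_cons.
Qed.

Definition path_cat (T : Type) (f g : R -> T) (t : R) : T :=
  if t <= 2^-1 then f (2 * t) else g (2 * t - 1).

Lemma path_cat0 (T : Type) (f g : R -> T) : path_cat f g 0 = f 0.
Proof. by rewrite /path_cat mulr0 invr_ge0 ler0n. Qed.

Lemma path_cat1 (T : Type) (f g : R -> T) : path_cat f g 1 = g 1.
Proof.
rewrite /path_cat mulr1 ifF; first by congr g; ring.
by apply/negbTE; rewrite -ltNge invf_lt1 ?ltr1n.
Qed.

Lemma path_cat_in (T : Type) (P : T -> Prop) (f g : R -> T) :
  (forall t, 0 <= t <= 1 -> P (f t)) -> (forall t, 0 <= t <= 1 -> P (g t)) ->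
  forall t, 0 <= t <= 1 -> P (path_cat f g t).
Proof.
move=> Pf Pg t /andP[t0 t1]; rewrite /path_cat; case: lerP => ht.
  by apply: Pf; apply/andP; split; lra.
by apply: Pg; apply/andP; split; lra.
Qed.

Lemma lipschitz01_cat f g : lipschitz01 f -> lipschitz01 g -> f 1 = g 0 ->
  lipschitz01 (path_cat f g).
Proof.
move=> [L1 L10 h1] [L2 L20 h2] fg.
exists (2 * (L1 + L2)); first by rewrite mulr_ge0 // addr_ge0.
move=> s t s0 st t1; rewrite /path_cat.
case: (lerP s 2^-1) => hs; case: (lerP t 2^-1) => ht.
- apply: le_trans (h1 (2 * s) (2 * t) _ _ _) _; rewrite ?lecR; nra.
- have -> : g (2 * t - 1) - f (2 * s) =
      (g (2 * t - 1) - g 0) + (f 1 - f (2 * s)) by rewrite fg; ring.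
  apply: le_trans (ler_normD _ _) _.
  apply: le_trans (lerD (h2 0 (2 * t - 1) _ _ _) (h1 (2 * s) 1 _ _ _)) _;
    rewrite ?lecR -?rmorphD ?lecR; nra.
- exfalso; lra.
- apply: le_trans (h2 (2 * s - 1) (2 * t - 1) _ _ _) _; rewrite ?lecR; nra.
Qed.

Lemma lipschitz01_rev f : lipschitz01 f -> lipschitz01 (fun t => f (1 - t)).
Proof.
move=> [L L0 h]; exists L => // s t s0 st t1; rewrite distrC.
apply: le_trans (h (1 - t) (1 - s) _ _ _) _; rewrite ?lecR; nra.
Qed.

Definition lipschitz01_mx m p (M : R -> 'M[C]_(m, p)) :=
  forall i j, lipschitz01 (fun t => M t i j).

Lemma lipschitz01_mx_cst m p (A : 'M[C]_(m, p)) : lipschitz01_mx (fun=> A).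
Proof. by move=> i j; exact: lipschitz01_cst. Qed.

Lemma lipschitz01_mxM m p q (A : R -> 'M[C]_(m, p)) (B : R -> 'M[C]_(p, q)) :
  lipschitz01_mx A -> lipschitz01_mx B -> lipschitz01_mx (fun t => A t *m B t).
Proof.
move=> hA hB i j; apply: eq_lipschitz01 (lipschitz01_sum _ _) => [t|k].
  by rewrite mxE.
exact: lipschitz01M.
Qed.

Lemma lipschitz01_adjm m (A : R -> 'M[C]_m) :
  lipschitz01_mx A -> lipschitz01_mx (fun t => adjm (A t)).
Proof.
move=> hA i j; apply: eq_lipschitz01 (lipschitz01J (hA j i)) => t.
by rewrite !mxE.
Qed.

Lemma lipschitz01_diag_mx m (v : R -> 'rV[C]_m) :
  (forall i, lipschitz01 (fun t => v t 0 i)) ->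
  lipschitz01_mx (fun t => diag_mx (v t)).
Proof.
move=> hv i j; have [->|ij] := eqVneq i j.
  by apply: eq_lipschitz01 (hv j) => t; rewrite !mxE eqxx mulr1n.
by apply: eq_lipschitz01 (lipschitz01_cst 0) => t; rewrite !mxE (negPf ij).
Qed.

Lemma lipschitz01_mx_uniform m p (M : R -> 'M[C]_(m, p)) :
  lipschitz01_mx M -> exists2 L : R, 0 <= L &
    forall i j s t, 0 <= s -> s <= t -> t <= 1 ->
    `|M t i j - M s i j| <= (L * (t - s))%:C.
Proof.
move=> hM.
pose P (ij : 'I_m * 'I_p) (L : R) := 0 <= L /\
  forall s t, 0 <= s -> s <= t -> t <= 1 ->
  `|M t ij.1 ij.2 - M s ij.1 ij.2| <= (L * (t - s))%:C.
have [Lf hLf] : exists Lf : 'I_m * 'I_p -> R, forall ij, P ij (Lf ij).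
  apply: (@fin_all_exists _ (fun=> R) P) => -[i j].
  by have [L L0 h] := hM i j; exists L.
have Lf_ge0 ij : 0 <= Lf ij by case: (hLf ij).
exists (\sum_ij Lf ij) => [|i j s t s0 st t1]; first exact: sumr_ge0.
apply: le_trans (proj2 (hLf (i, j)) s t s0 st t1) _.
rewrite lecR ler_wpM2r ?subr_ge0 // (bigD1 (i, j)) //= lerDl.
exact: sumr_ge0.
Qed.

Lemma lipschitz01_mx_cat m p (f g : R -> 'M[C]_(m, p)) :
  lipschitz01_mx f -> lipschitz01_mx g -> f 1 = g 0 -> lipschitz01_mx (path_cat f g).
Proof.
move=> hf hg fg i j.
apply: eq_lipschitz01 (lipschitz01_cat (hf i j) (hg i j) _) => [t|].
  by rewrite /path_cat; case: ifP.
by rewrite fg.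
Qed.

End Lipschitz.

Section QuotientPath.
Variables (R : realType) (d : nat).
Local Notation C := R[i].

Lemma lipschitz01_mx_near m p (M : R -> 'M[C]_(m, p)) : lipschitz01_mx M ->
  forall t (e : R), 0 < e -> 0 <= t <= 1 -> exists2 del : R, 0 < del &
  forall s, 0 <= s <= 1 -> `|s - t| < del -> forall i j, `|M s i j - M t i j| < e%:C.
Proof.
move=> /lipschitz01_mx_uniform [L L0 hL] t e e0 /andP[t0 t1].
exists (e / (L + 1)) => [|s /andP[s0 s1] st i j]; first by rewrite divr_gt0 // ltr_wpDl.
have {st} st : `|s - t| * (L + 1) < e by rewrite -ltr_pdivlMr // ltr_wpDl.
have [hs|hs] := lerP s t.
  rewrite distrC; apply: le_lt_trans (hL i j s t s0 hs t1) _; rewrite ltcR.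
  by move: st; rewrite distrC ger0_norm ?subr_ge0 // => st; nra.
apply: le_lt_trans (hL i j t s t0 (ltW hs) s1) _; rewrite ltcR.
by move: st; rewrite ger0_norm ?subr_ge0 ?(ltW hs) // => st; nra.
Qed.

Lemma quot_path_lipschitz01 (g : R -> pt R d) :
  (forall t, 0 <= t <= 1 -> inM (g t)) ->
  lipschitz01_mx (fun t => (g t).1) -> lipschitz01_mx (fun t => (g t).2) ->
  quot_path g.
Proof.
move=> gM g1 g2; split => // V [_ [_ V_open]] t t01 Vgt.
have [eps eps0 Veps] := V_open _ Vgt.
have eps_real : eps = (complex.Re eps)%:C by rewrite RRe_real // gtr0_real.
have e0 : 0 < complex.Re eps by rewrite -ltcR -eps_real.
have [del1 del10 near1] := lipschitz01_mx_near g1 e0 t01.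
have [del2 del20 near2] := lipschitz01_mx_near g2 e0 t01.
exists (Order.min del1 del2) => [|s s01]; first by rewrite lt_min del10 del20.
rewrite lt_min => /andP[st1 st2]; apply: Veps; first exact: gM.
by move=> l j; rewrite eps_real; split; [apply: near1 | apply: near2].
Qed.

Lemma orbit_equiv_refl (x : pt R d) : Defs.equiv x x.
Proof. by exists 1%:M; rewrite unitmx1 !mul1mx. Qed.

Lemma orbit_equiv_sym (x y : pt R d) : Defs.equiv x y -> Defs.equiv y x.
Proof.
move=> [T [T_unit [y1 y2]]]; exists (invmx T).
by rewrite unitmx_inv T_unit y1 y2 !mulKmx.
Qed.

End QuotientPath.

Section Adjoint.
Variables (R : realType) (m : nat).
Local Notation C := R[i].

Lemma adjmE (M : 'M[C]_m) : adjm M = (M ^t*)%sesqui.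
Proof. by rewrite /adjm map_trmx. Qed.

Lemma adjmK : involutive (@adjm R m).
Proof. by move=> M; apply/matrixP => i j; rewrite !mxE conjcK. Qed.

Lemma adjmM (X Y : 'M[C]_m) : adjm (X *m Y) = adjm Y *m adjm X.
Proof. by rewrite /adjm map_mxM trmx_mul. Qed.

Lemma adjmD (X Y : 'M[C]_m) : adjm (X + Y) = adjm X + adjm Y.
Proof. by rewrite /adjm map_mxD linearD. Qed.

Lemma adjmN (X : 'M[C]_m) : adjm (- X) = - adjm X.
Proof. by rewrite /adjm map_mxN linearN. Qed.

Lemma adjm1 : adjm (1%:M : 'M[C]_m) = 1%:M.
Proof. by rewrite /adjm map_mx1 trmx1. Qed.

Lemma adjmZ_real (a : R) (X : 'M[C]_m) :
  adjm (a%:C *: X) = a%:C *: adjm X.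
Proof.
by apply/matrixP => i j; rewrite !mxE rmorphM; congr (_ * _); exact: conjc_real.
Qed.

Lemma adjm_diag (v : 'rV[C]_m) : adjm (diag_mx v) = diag_mx (map_mx conjc v).
Proof.
apply/matrixP => i j; rewrite !mxE; have [->|ji] := eqVneq j i.
  by rewrite !mulr1n.
by rewrite !mulr0n conjc0.
Qed.

End Adjoint.

Section NormalForm.
Variables (R : realType) (d : nat).
Local Notation C := R[i].
Local Notation n := (2 * d)%N.
Variable K : {set 'I_n}.

Definition diagK : 'M[C]_n := diag_mx (\row_i (i \in K)%:R).

Lemma AK_diagK (S : 'M[C]_n) : AK K S = S *m (1%:M - diagK) - diagK.
Proof.
rewrite mulmxBr mulmx1 mul_mx_diag; apply/matrixP => l i; rewrite !mxE.
by case: eqVneq => [->|_]; case: (i \in K); rewrite /= ?mulr1n ?mulr0n; ring.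
Qed.

Lemma BK_diagK (S : 'M[C]_n) : BK K S = S *m diagK + (1%:M - diagK).
Proof.
rewrite mul_mx_diag; apply/matrixP => l i; rewrite !mxE.
by case: eqVneq => [->|_]; case: (i \in K); rewrite /= ?mulr1n ?mulr0n; ring.
Qed.

Lemma adjm_diagK : adjm diagK = diagK.
Proof.
rewrite adjm_diag; congr diag_mx; apply/rowP => i.
by rewrite !mxE conjc_nat.
Qed.

Lemma diagK_idem : diagK *m diagK = diagK.
Proof.
rewrite mulmx_diag; congr diag_mx; apply/rowP => i; rewrite !mxE.
by case: (i \in K); rewrite ?mulr1 ?mulr0.
Qed.

Lemma rank_AKBK (S : 'M[C]_n) : \rank (row_mx (AK K S) (BK K S)) = n.
Proof.
apply/eqP; rewrite eqn_leq rank_leq_row /=.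
pose P : 'M[C]_(n + n, n) :=
  col_mx (diag_mx (\row_i - (i \in K)%:R)) (diag_mx (\row_i (i \notin K)%:R)).
apply: leq_trans (mxrankM_maxl _ P).
suff -> : row_mx (AK K S) (BK K S) *m P = 1%:M by rewrite mxrank1.
rewrite mul_row_col !mul_mx_diag; apply/matrixP => l i; rewrite !mxE.
by case: eqVneq => [->|_]; case: (i \in K); rewrite /= ?mulr1n ?mulr0n; ring.
Qed.

Lemma inM_AKBK (S : 'M[C]_n) : Defs.hermitian S -> inM (AK K S, BK K S).
Proof.
move=> S_herm; split; first exact: rank_AKBK.
rewrite /= AK_diagK BK_diagK !(adjmD, adjmN, adjmM) adjm1 adjm_diagK S_herm.
rewrite !(mulmxDl, mulmxDr, mulmxBl, mulmxBr, mulmx1, mul1mx, mulmxN, mulNmx).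
rewrite !mulmxA -!(mulmxA _ diagK diagK) !diagK_idem.
by apply/matrixP => i j; rewrite !mxE; ring.
Qed.

Lemma lipschitz01_AK (S : R -> 'M[C]_n) :
  lipschitz01_mx S -> lipschitz01_mx (fun t => AK K (S t)).
Proof.
move=> lS l i; case: (boolP (i \in K)) => iK.
  by apply: eq_lipschitz01 (lipschitz01_cst (- (l == i)%:R)) => t; rewrite mxE iK.
by apply: eq_lipschitz01 (lS l i) => t; rewrite mxE (negPf iK).
Qed.

Lemma lipschitz01_BK (S : R -> 'M[C]_n) :
  lipschitz01_mx S -> lipschitz01_mx (fun t => BK K (S t)).
Proof.
move=> lS l i; case: (boolP (i \in K)) => iK.
  by apply: eq_lipschitz01 (lS l i) => t; rewrite mxE iK.
by apply: eq_lipschitz01 (lipschitz01_cst (l == i)%:R) => t; rewrite mxE (negPf iK).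
Qed.

End NormalForm.

Section UnitCircle.
Variable R : realType.
Local Notation C := R[i].

Definition cayley (y : R) : C := (1 + 'i * y%:C) / (1 - 'i * y%:C).

Lemma cayley_den_conj (y : R) : (1 - 'i * y%:C)^* = 1 + 'i * y%:C.
Proof. by simpc. Qed.

Lemma cayley_den_sqr_norm (y : R) : `|1 - 'i * y%:C| ^+ 2 = (1 + y ^+ 2)%:C.
Proof.
rewrite sqr_normc cayley_den_conj rmorphD rmorphXn rmorph1.
by rewrite -subr_sqr exprMn sqr_i mulN1r opprK expr1n.
Qed.

Lemma cayley_den_ge1 (y : R) : 1 <= `|1 - 'i * y%:C|.
Proof.
rewrite -(ler_pXn2r (_ : 0 < 2)%N) ?nnegrE ?expr1n ?cayley_den_sqr_norm //.
by rewrite -(rmorph1 (real_complex R)) lecR lerDl sqr_ge0.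
Qed.

Lemma cayley_den_neq0 (y : R) : 1 - 'i * y%:C != 0.
Proof. by rewrite -normr_gt0 (lt_le_trans ltr01) ?cayley_den_ge1. Qed.

Lemma cayley_unit (y : R) : cayley y * (cayley y)^* = 1.
Proof.
rewrite -sqr_normc /cayley normrM normfV -cayley_den_conj normcJ.
by rewrite divff ?expr1n // normr_eq0 cayley_den_neq0.
Qed.

Lemma cayley_surj (v : C) : v * v^* = 1 -> v != -1 -> exists y, cayley y = v.
Proof.
move=> v_unit v_neqN1; set x := complex.Re v; set y := complex.Im v.
have vE : v = x%:C + 'i * y%:C by apply: complexE.
have xy1 : x ^+ 2 + y ^+ 2 = 1.
  by apply: complexI; rewrite add_Re2_Im2 sqr_normc v_unit rmorph1.
have x1_neq0 : 1 + x != 0.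
  apply: contra v_neqN1 => /eqP x1; have xN1 : x = -1 by lra.
  have y0 : y = 0 by move: xy1; rewrite xN1 => ?; nra.
  by rewrite vE xN1 y0 rmorph0 mulr0 addr0 rmorphN rmorph1.
(* b = tan(theta / 2) for v = e^(i theta) *)
exists (y / (1 + x)); set b := y / (1 + x).
have e1 : x + y * b = 1.
  have -> : x + y * b = (x * (1 + x) + y ^+ 2) / (1 + x) by rewrite /b; field.
  by rewrite (_ : x * (1 + x) + y ^+ 2 = 1 + x) ?divff //; lra.
have e2 : y - x * b = b by rewrite /b; field.
apply: (mulIf (cayley_den_neq0 b)); rewrite /cayley divfK ?cayley_den_neq0 // vE.
have -> : (x%:C + 'i * y%:C) * (1 - 'i * b%:C) =
    (x + y * b)%:C + 'i * (y - x * b)%:C - ('i ^+ 2 + 1) * (y * b)%:C.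
  by rewrite !rmorphD !rmorphN !rmorphM; ring.
by rewrite sqr_i addNr mul0r subr0 e1 e2 rmorph1.
Qed.

(* The Cayley transform reaches every point of the unit circle except -1, so
   its square reaches every point. *)
Definition circle_path (b t : R) : C := cayley (b * t) ^+ 2.

Lemma circle_path0 (b : R) : circle_path b 0 = 1.
Proof. by rewrite /circle_path /cayley mulr0 rmorph0 mulr0 subr0 addr0 divr1 expr1n. Qed.

Lemma circle_path_unit (b t : R) : circle_path b t * (circle_path b t)^* = 1.
Proof. by rewrite /circle_path rmorphXn -exprMn cayley_unit expr1n. Qed.

Lemma lipschitz01_circle_path (b : R) : lipschitz01 (circle_path b).
Proof.
have lin (c : C) : lipschitz01 (fun t => 1 + c * (b * t)%:C).
  apply: eq_lipschitz01 (lipschitz01D (lipschitz01_cst 1)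
    (lipschitz01M (lipschitz01_cst (c * b%:C)) (lipschitz01_id R))) => t.
  by rewrite rmorphM mulrA.
have cayley_lip : lipschitz01 (fun t => cayley (b * t)).
  apply: lipschitz01M (lin 'i) (lipschitz01V _ _) => [|t].
    by apply: eq_lipschitz01 (lin (- 'i)) => t; rewrite mulNr.
  exact: cayley_den_ge1.
apply: eq_lipschitz01 (lipschitz01M cayley_lip cayley_lip) => t.
by rewrite /circle_path expr2.
Qed.

Lemma circle_path_surj (w : C) : w * w^* = 1 -> exists b, circle_path b 1 = w.
Proof.
move=> w_unit.
have [v [v2 v_neqN1]] : exists v : C, v ^+ 2 = w /\ v != -1.
  have [sw|sw] := eqVneq (sqrtC w) (-1); last by exists (sqrtC w); rewrite sqrtCK.
  exists 1; rewrite -(sqrtCK w) sw sqrrN expr1n; split => //.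
  by rewrite -subr_eq0 opprK -(natrD _ 1 1) pnatr_eq0.
have v_unit : v * v^* = 1.
  have : (v * v^*) ^+ 2 = 1 by rewrite exprMn -rmorphXn v2.
  move/eqP; rewrite sqrf_eq1 => /orP[/eqP //|/eqP vN1].
  by have := mulcJ_ge0 v; rewrite vN1 ler0N1.
have [b vb] := cayley_surj v_unit v_neqN1.
by exists b; rewrite /circle_path mulr1 vb.
Qed.

End UnitCircle.

Section UnitaryPath.
Variables (R : realType) (k : nat).
Local Notation C := R[i].

Lemma unitarymx_adjm (U : 'M[C]_k) : U \is unitarymx -> adjm U *m U = 1%:M.
Proof. by move/unitarymxP; rewrite -adjmE => /mulmx1C. Qed.

Lemma adjm_unitarymx (U : 'M[C]_k) : (adjm U \is unitarymx) = (U \is unitarymx).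
Proof. by rewrite adjmE trmxC_unitary. Qed.

Lemma diag_unitarymx (v : 'rV[C]_k) :
  (diag_mx v \is unitarymx) = [forall i, v 0 i * (v 0 i)^* == 1].
Proof.
apply/unitarymxP/forallP => [vv i|vv].
  move/matrixP: vv => /(_ i i).
  by rewrite -adjmE adjm_diag mulmx_diag !mxE eqxx !mulr1n => ->.
rewrite -adjmE adjm_diag mulmx_diag -diag_const_mx; congr diag_mx.
by apply/rowP => i; rewrite !mxE; apply/eqP.
Qed.

Lemma unitary_path (U0 U1 : 'M[C]_k) : U0 \is unitarymx -> U1 \is unitarymx ->
  exists U : R -> 'M[C]_k, [/\ U 0 = U0, U 1 = U1, lipschitz01_mx U &
    forall t, U t \is unitarymx].
Proof.
move=> U0u U1u; pose W := U1 *m adjm U0.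
have U0'u : adjm U0 \is unitarymx by rewrite adjm_unitarymx.
have Wu : W \is unitarymx := mul_unitarymx U1u U0'u.
have /orthomx_spectralP : W \is normalmx.
  by apply/normalmxP; rewrite (unitarymxP Wu) -adjmE unitarymx_adjm.
rewrite invmx_unitary ?spectral_unitarymx // -adjmE.
set V := spectralmx W; set w := spectral_diag W => WE.
have Vu : V \is unitarymx := spectral_unitarymx W.
have V'u : adjm V \is unitarymx by rewrite adjm_unitarymx.
have wu : diag_mx w \is unitarymx.
  suff -> : diag_mx w = V *m W *m adjm V.
    exact: mul_unitarymx (mul_unitarymx Vu Wu) V'u.
  have VV : V *m adjm V = 1%:M by rewrite adjmE; apply/unitarymxP.
  by rewrite WE !mulmxA VV mul1mx -mulmxA VV mulmx1.
have [b bw] : exists b : 'I_k -> R, forall i, circle_path (b i) 1 = w 0 i.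
  apply: (@fin_all_exists _ (fun=> R) (fun i b => circle_path b 1 = w 0 i)) => i.
  by apply: circle_path_surj; move: wu; rewrite diag_unitarymx => /forallP /(_ i) /eqP.
pose G t := diag_mx (\row_i circle_path (b i) t).
have Gu t : G t \is unitarymx.
  by rewrite diag_unitarymx; apply/forallP => i; rewrite mxE circle_path_unit.
exists (fun t => adjm V *m G t *m V *m U0); split.
- suff -> : G 0 = 1%:M by rewrite mulmx1 (unitarymx_adjm Vu) mul1mx.
  by rewrite /G -diag_const_mx; congr diag_mx; apply/rowP => i; rewrite !mxE circle_path0.
- suff -> : G 1 = diag_mx w by rewrite -WE -mulmxA (unitarymx_adjm U0u) mulmx1.
  by congr diag_mx; apply/rowP => i; rewrite mxE bw.
- apply: lipschitz01_mxM (lipschitz01_mx_cst _).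
  apply: lipschitz01_mxM (lipschitz01_mx_cst _).
  apply: lipschitz01_mxM (lipschitz01_mx_cst _) _.
  apply: lipschitz01_diag_mx => i.
  by apply: eq_lipschitz01 (lipschitz01_circle_path (b i)) => t; rewrite mxE.
- by move=> t; exact: mul_unitarymx (mul_unitarymx (mul_unitarymx V'u (Gu t)) Vu) U0u.
Qed.

End UnitaryPath.

Section Signs.
Variables (T : realFieldType) (n0 np nm : nat).

Definition has_signs (s : seq T) := [/\ count (fun r => r == 0) s = n0,
  count (fun r => 0 < r) s = np & count (fun r => r < 0) s = nm].

Lemma has_signs_map_sg (f : T -> T) (s : seq T) : (forall a, Num.sg (f a) = Num.sg a) ->
  has_signs (map f s) <-> has_signs s.
Proof.
move=> f_sg; have e0 : (fun a => f a == 0) =1 (fun a => a == 0).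
  by move=> a; rewrite -sgr_eq0 f_sg sgr_eq0.
have ep : (fun a => 0 < f a) =1 (fun a => 0 < a).
  by move=> a; rewrite -sgr_gt0 f_sg sgr_gt0.
have em : (fun a => f a < 0) =1 (fun a => a < 0).
  by move=> a; rewrite -sgr_lt0 f_sg sgr_lt0.
by rewrite /has_signs !count_map (eq_count e0) (eq_count ep) (eq_count em).
Qed.

Lemma perm_eq_map_sg (s t : seq T) : has_signs s -> has_signs t ->
  perm_eq (map Num.sg s) (map Num.sg t).
Proof.
move=> [s0 sp sm] [t0 tp tm].
suff count_sg a :
    count_mem (Num.sg a) (map Num.sg s) = count_mem (Num.sg a) (map Num.sg t).
  by apply/allP => _ /[!mem_cat] /orP[] /mapP[a _ ->]; rewrite /= count_sg.
have sgE (y : T) (p : pred T) : (forall r, (Num.sg r == y) = p r) ->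
    forall u, count (preim Num.sg (pred1 y)) u = count p u.
  by move=> hp u; apply: eq_count => r /=; exact: hp.
rewrite !count_map; have [a0|a0|->] := ltrgt0P a.
- by rewrite (gtr0_sg a0) !(sgE _ _ (fun r => (sgr_cp0 r).1.1)) sp tp.
- by rewrite (ltr0_sg a0) !(sgE _ _ (fun r => (sgr_cp0 r).1.2)) sm tm.
- by rewrite sgr0 !(sgE _ _ (fun r => (sgr_cp0 r).2)) s0 t0.
Qed.

Lemma sg_lerp (a t : T) : 0 <= t <= 1 ->
  Num.sg ((1 - t) * a + t * Num.sg a) = Num.sg a.
Proof.
move=> /andP[t0 t1]; have [a0|a0|->] := ltrgt0P a.
- by rewrite (gtr0_sg a0) gtr0_sg //; nra.
- by rewrite (ltr0_sg a0) ltr0_sg //; nra.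
- by rewrite sgr0 !mulr0 addr0 sgr0.
Qed.

End Signs.

Section UnitaryInertia.
Variables (R : realType) (k n0 np nm : nat).
Local Notation C := R[i].

Definition row_entries (T : Type) (v : 'rV[T]_k) : seq T := [seq v 0 i | i <- enum 'I_k].

Lemma row_entries_map (T T' : Type) (f : T -> T') (v : 'rV[T]_k) :
  row_entries (map_mx f v) = map f (row_entries v).
Proof. by rewrite /row_entries -[in RHS]map_comp; apply: eq_map => i; rewrite /= mxE. Qed.

Definition real_diag_mx (v : 'rV[R]_k) : 'M[C]_k := diag_mx (map_mx (real_complex R) v).

Definition unitary_inertia (M : 'M[C]_k) := exists U v, [/\ U \is unitarymx,
  has_signs n0 np nm (row_entries v) & M = adjm U *m real_diag_mx v *m U].

Lemma char_poly_conj (P Q A : 'M[C]_k) : Q *m P = 1%:M ->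
  char_poly (Q *m A *m P) = char_poly A.
Proof.
move=> QP; have PQ := mulmx1C QP; rewrite /char_poly.
have -> : char_poly_mx (Q *m A *m P) =
    map_mx polyC Q *m char_poly_mx A *m map_mx polyC P.
  rewrite /char_poly_mx mulmxBr mulmxBl -!map_mxM; congr (_ - _).
  by rewrite scalar_mxC -mulmxA -map_mxM QP map_mx1 mulmx1.
rewrite !det_mulmx mulrC mulrA -det_mulmx -map_mxM PQ map_mx1 det1.
by rewrite mul1r.
Qed.

Lemma char_poly_real_diag (v : 'rV[R]_k) : char_poly (real_diag_mx v) =
  \prod_(r <- map (real_complex R) (row_entries v)) ('X - r%:P).
Proof.
rewrite char_poly_trig ?diag_mx_is_trig // -map_comp big_map big_enum /=.
by apply: eq_bigr => i _; rewrite !mxE eqxx mulr1n.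
Qed.

Lemma counts_real_complex (s : seq R) :
  [/\ count (fun r : C => r == 0) (map (real_complex R) s) = count (fun r => r == 0) s,
      count (fun r : C => 0 < r) (map (real_complex R) s) = count (fun r => 0 < r) s &
      count (fun r : C => r < 0) (map (real_complex R) s) = count (fun r => r < 0) s].
Proof.
rewrite !count_map; split; apply: eq_count => r /=.
- by rewrite -(inj_eq (@complexI R)).
- by rewrite -ltcR.
- by rewrite -ltcR.
Qed.

Lemma unitary_inertia_inertia (M : 'M[C]_k) : unitary_inertia M -> inertia M n0 np nm.
Proof.
move=> [U [v [Uu [s0 sp sm] ->]]]; have [c0 cp cm] := counts_real_complex (row_entries v).
exists (map (real_complex R) (row_entries v)).
rewrite (char_poly_conj _ (unitarymx_adjm Uu)); split; last by rewrite c0 cp cm.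
exact: char_poly_real_diag.
Qed.

Lemma unitary_inertia_hermitian (M : 'M[C]_k) : unitary_inertia M -> adjm M = M.
Proof.
move=> [U [v [_ _ ->]]]; rewrite !adjmM adjmK adjm_diag mulmxA.
by congr (_ *m diag_mx _ *m _); apply/rowP => i; rewrite !mxE conjc_real.
Qed.

Lemma hermitian_unitary_inertia (H : 'M[C]_k) : adjm H = H -> inertia H n0 np nm ->
  unitary_inertia H.
Proof.
move=> H_herm [rs [H_char [r0 [rp rm]]]].
have Hh : H \is hermsymmx by apply/is_hermitianmxP; rewrite expr0 scale1r -adjmE H_herm.
have /orthomx_spectralP HE := hermitian_normalmx Hh.
have /mxOverP Hreal := hermitian_spectral_diag_real Hh.
set P := spectralmx H in HE; set a := spectral_diag H in HE Hreal.
have Pu : P \is unitarymx := spectral_unitarymx H.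
pose v := map_mx (@complex.Re R) a.
have vE : real_diag_mx v = diag_mx a.
  by congr diag_mx; apply/matrixP => i j; rewrite !mxE RRe_real ?Hreal.
have {}HE : H = adjm P *m real_diag_mx v *m P.
  by rewrite vE {1}HE (invmx_unitary Pu) adjmE.
exists P, v; split; [exact: Pu | | exact: HE].
have [c0 cp cm] := counts_real_complex (row_entries v).
suff rsE : perm_eq rs (map (real_complex R) (row_entries v)).
  by split; rewrite -?c0 -?cp -?cm -(seq.permP rsE).
apply: prod_XsubC_eq; rewrite -H_char -char_poly_real_diag.
by rewrite {1}HE (char_poly_conj _ (unitarymx_adjm Pu)).
Qed.

Lemma sign_path (U : 'M[C]_k) (v : 'rV[R]_k) : U \is unitarymx ->
  has_signs n0 np nm (row_entries v) ->
  exists p : R -> 'M[C]_k, [/\ p 0 = adjm U *m real_diag_mx v *m U,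
    p 1 = adjm U *m real_diag_mx (map_mx Num.sg v) *m U, lipschitz01_mx p &
    forall t, 0 <= t <= 1 -> unitary_inertia (p t)].
Proof.
move=> Uu vs; pose w t := map_mx (fun a => (1 - t) * a + t * Num.sg a) v.
exists (fun t => adjm U *m real_diag_mx (w t) *m U); split.
- congr (_ *m real_diag_mx _ *m _); apply/rowP => i.
  by rewrite mxE subr0 mul1r mul0r addr0.
- congr (_ *m real_diag_mx _ *m _); apply/rowP => i.
  by rewrite !mxE subrr mul0r add0r mul1r.
- apply: lipschitz01_mxM (lipschitz01_mx_cst _).
  apply: lipschitz01_mxM (lipschitz01_mx_cst _) _.
  apply: lipschitz01_diag_mx => i.
  apply: eq_lipschitz01 (lipschitz01D (lipschitz01_cst (v 0 i)%:C)
    (lipschitz01M (lipschitz01_id R)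
                  (lipschitz01_cst (Num.sg (v 0 i) - v 0 i)%:C))) => t.
  by rewrite !mxE -rmorphM -rmorphD; congr (_%:C); ring.
- move=> t t01; exists U, (w t); split => //.
  by rewrite row_entries_map; apply/has_signs_map_sg => // a; exact: sg_lerp.
Qed.

Lemma perm_real_diag_mx (v w : 'rV[R]_k) : perm_eq (row_entries v) (row_entries w) ->
  exists2 P : 'M[C]_k, P \is unitarymx & real_diag_mx w = adjm P *m real_diag_mx v *m P.
Proof.
have -> : row_entries w = [tuple w 0 i | i < k] by [].
move=> /tuple_permP[q vq].
have vwq i : v 0 i = w 0 (q i).
  have <- : nth 0 (row_entries v) i = v 0 i.
    by rewrite /row_entries (nth_map i) ?size_enum_ord ?nth_ord_enum.
  by rewrite vq -(tnth_nth 0) !tnth_mktuple.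
have adjm_perm : adjm (perm_mx q : 'M[C]_k) = perm_mx q^-1.
  by rewrite /adjm map_perm_mx tr_perm_mx.
exists (perm_mx q).
  by apply/unitarymxP; rewrite -adjmE adjm_perm -perm_mxM mulgV perm_mx1.
rewrite adjm_perm -row_permE -{2}(invgK q) -col_permE.
by apply/matrixP => a b; rewrite !mxE (inj_eq perm_inj) vwq permKV.
Qed.

Lemma unitary_inertia_path (H0 H1 : 'M[C]_k) :
  unitary_inertia H0 -> unitary_inertia H1 ->
  exists p : R -> 'M[C]_k, [/\ p 0 = H0, p 1 = H1, lipschitz01_mx p &
    forall t, 0 <= t <= 1 -> unitary_inertia (p t)].
Proof.
move=> [U0 [v0 [U0u v0s ->]]] [U1 [v1 [U1u v1s ->]]].
have [p0 [p00 p01 lp0 Ip0]] := sign_path U0u v0s.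
have [p1 [p10 p11 lp1 Ip1]] := sign_path U1u v1s.
set s0 := map_mx Num.sg v0 in p01; set s1 := map_mx Num.sg v1 in p11.
have s0s : has_signs n0 np nm (row_entries s0).
  by rewrite row_entries_map; apply/has_signs_map_sg => // a; exact: sgr_id.
have [P Pu s1E] : exists2 P : 'M[C]_k, P \is unitarymx &
    real_diag_mx s1 = adjm P *m real_diag_mx s0 *m P.
  by apply: perm_real_diag_mx; rewrite !row_entries_map; exact: perm_eq_map_sg v0s v1s.
have [U [U0E U1E lU Uu]] := unitary_path U0u (mul_unitarymx Pu U1u).
pose q t := adjm (U t) *m real_diag_mx s0 *m U t.
exists (path_cat p0 (path_cat q (fun t => p1 (1 - t)))); split.
- by rewrite path_cat0.
- by rewrite !path_cat1 subrr.
- apply: lipschitz01_mx_cat lp0 _ _; last by rewrite path_cat0 /q U0E.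
  apply: lipschitz01_mx_cat => [||]; last by rewrite subr0 p11 /q U1E s1E adjmM !mulmxA.
    apply: (lipschitz01_mxM _ lU).
    exact: lipschitz01_mxM (lipschitz01_adjm lU) (lipschitz01_mx_cst _).
  by move=> i j; exact: lipschitz01_rev (lp1 i j).
- have Iq t : 0 <= t <= 1 -> unitary_inertia (q t).
    by move=> _; exists (U t), s0; split; [exact: Uu | exact: s0s |].
  have Ip1_rev t : 0 <= t <= 1 -> unitary_inertia (p1 (1 - t)).
    by case/andP=> t0 t1; apply: Ip1; apply/andP; split; lra.
  exact: (path_cat_in Ip0 (path_cat_in Iq Ip1_rev)).
Qed.

End UnitaryInertia.

Section PrincipalBlock.
Variables (R : realType) (d : nat).
Local Notation C := R[i].
Local Notation n := (2 * d)%N.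
Variables (K : {set 'I_n}) (x0 : 'I_n).
Hypothesis x0K : x0 \in K.

Definition extendK (H : 'M[C]_#|K|) (S : 'M[C]_n) : 'M[C]_n :=
  \matrix_(l, m) if (l \in K) && (m \in K)
                 then H (enum_rank_in x0K l) (enum_rank_in x0K m) else S l m.

Lemma subK_extendK (H : 'M[C]_#|K|) (S : 'M[C]_n) : subK K (extendK H S) = H.
Proof. by apply/matrixP => i j; rewrite !mxE !enum_valP !enum_valK_in. Qed.

Lemma extendK_subK (S : 'M[C]_n) : extendK (subK K S) S = S.
Proof.
apply/matrixP => l m; rewrite mxE; case: ifP => // /andP[lK mK].
by rewrite mxE !enum_rankK_in.
Qed.

Lemma adjm_extendK (H : 'M[C]_#|K|) (S : 'M[C]_n) :
  adjm (extendK H S) = extendK (adjm H) (adjm S).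
Proof. by apply/matrixP => l m; rewrite !mxE andbC; case: ifP; rewrite ?mxE. Qed.

Lemma lipschitz01_extendK (H : R -> 'M[C]_#|K|) (S : R -> 'M[C]_n) :
  lipschitz01_mx H -> lipschitz01_mx S -> lipschitz01_mx (fun t => extendK (H t) (S t)).
Proof.
move=> lH lS l m; case lmK: ((l \in K) && (m \in K)).
  by apply: eq_lipschitz01 (lH _ _) => t; rewrite mxE lmK.
by apply: eq_lipschitz01 (lS l m) => t; rewrite mxE lmK.
Qed.

Variables n0 np nm : nat.

Lemma hermitian_inertia_path (Sx Sy : 'M[C]_n) :
  Defs.hermitian Sx -> Defs.hermitian Sy ->
  inertia (subK K Sx) n0 np nm -> inertia (subK K Sy) n0 np nm ->
  exists Sp : R -> 'M[C]_n, [/\ Sp 0 = Sx, Sp 1 = Sy, lipschitz01_mx Sp &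
    forall t, 0 <= t <= 1 -> Defs.hermitian (Sp t) /\ inertia (subK K (Sp t)) n0 np nm].
Proof.
move=> Sx_herm Sy_herm Sx_in Sy_in.
have subK_herm (S : 'M[C]_n) : Defs.hermitian S -> adjm (subK K S) = subK K S.
  by move=> S_herm; apply/matrixP => i j; rewrite -[in RHS]S_herm !mxE.
have [H [H0 H1 lH IH]] := unitary_inertia_path
  (hermitian_unitary_inertia (subK_herm _ Sx_herm) Sx_in)
  (hermitian_unitary_inertia (subK_herm _ Sy_herm) Sy_in).
pose L t := (1 - t)%:C *: Sx + t%:C *: Sy.
have lL : lipschitz01_mx L.
  move=> l m; apply: eq_lipschitz01 (lipschitz01D (lipschitz01_cst (Sx l m))
    (lipschitz01M (lipschitz01_id R) (lipschitz01_cst (Sy l m - Sx l m)))) => t.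
  by rewrite !mxE rmorphB rmorph1; ring.
have L_herm t : Defs.hermitian (L t).
  by rewrite /Defs.hermitian adjmD !adjmZ_real Sx_herm Sy_herm.
exists (fun t => extendK (H t) (L t)); split.
- by rewrite H0 /L subr0 rmorph1 rmorph0 scale1r scale0r addr0 extendK_subK.
- by rewrite H1 /L subrr rmorph1 rmorph0 scale1r scale0r add0r extendK_subK.
- exact: lipschitz01_extendK.
- move=> t t01; rewrite /Defs.hermitian adjm_extendK subK_extendK L_herm.
  rewrite (unitary_inertia_hermitian (IH t t01)).
  by split; last exact: unitary_inertia_inertia (IH t t01).
Qed.

End PrincipalBlock.

Theorem lemma7p3 (R : realType) (d : nat) (K : {set 'I_(2 * d)})
    (n0 np : nat) :
  (2 <= d)%N -> K != set0 ->
  (n0 <= #|K|)%N -> (np <= #|K| - n0)%N ->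
  path_connected (@inJ R d K n0 np (#|K| - n0 - np)%N).
Proof.
(* Only K != set0 is used: it supplies the default index x0 needed to
   enumerate K. *)
move=> _ /set0Pn[x0 x0K] _ _ x y.
move=> [_ [Sx [[Sx_herm x_eq] Sx_in]]] [_ [Sy [[Sy_herm y_eq] Sy_in]]].
have [Sp [Sp0 Sp1 lSp Sp_in]] := hermitian_inertia_path x0K Sx_herm Sy_herm Sx_in Sy_in.
exists (fun t => (AK K (Sp t), BK K (Sp t))); split; [|split; [|split]].
- apply: quot_path_lipschitz01; [|exact: lipschitz01_AK | exact: lipschitz01_BK].
  by move=> t /Sp_in[Sp_herm _]; exact: inM_AKBK.
- move=> t /Sp_in[Sp_herm Sp_inertia]; split; first exact: inM_AKBK.
  by exists (Sp t); split => //; split => //; exact: orbit_equiv_refl.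
- by apply: orbit_equiv_sym; rewrite Sp0.
- by apply: orbit_equiv_sym; rewrite Sp1.
Qed.
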